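(* Let $\mathcal C\subseteq2^{[n]}$ be a nonempty code. For all $\sigma,\tau\subseteq[n]$, $x^\sigma y^\tau\in I_{\Gamma(\mathcal C)}$ if and only if $x^\sigma(1-x)^\tau\in I_{\mathcal C}$. Consequently, $$I_{\Gamma(\mathcal C)}=\langle x^\sigma y^\tau : x^\sigma(1-x)^\tau\in CF(J_{\mathcal C})\rangle+\langle x_iy_i: i\in[n]\rangle.$$
   Context: Let $R=\mathbb F_2[x_1,\dots,x_n]$ and $S=\mathbb F_2[x_1,\dots,x_n,y_1,\dots,y_n]$. For $\sigma,\tau\subseteq[n]$ write $x^\sigma=\prod_{i\in\sigma}x_i$, $y^\tau=\prod_{j\in\tau}y_j$, $(1-x)^\tau=\prod_{j\in\tau}(1-x_j)$; polynomials $x^\sigma(1-x)^\tau$ are pseudo-monomials. A polynomial $f\in R$ is evaluated at $\sigma\subseteq[n]$ by setting $x_i=1$ for $i\in\sigma$ and $x_i=0$ otherwise. $I_{\mathcal C}=\{f\in R: f(\sigma)=0\ \forall\sigma\in\mathcal C\}$; the neural ideal is $J_{\mathcal C}=\langle x^\sigma(1-x)^{[n]\setminus\sigma}:\sigma\notin\mathcal C\rangle$; the canonical form $CF(J_{\mathcal C})$ is the set of pseudo-monomials $f\in J_{\mathcal C}$ such that no other pseudo-monomial in $J_{\mathcal C}$ divides $f$. The polar complex $\Gamma(\mathcal C)$ is the simplicial complex on $[n]\sqcup\{\bar1,\dots,\bar n\}$ of all subsets of $\sigma\sqcup\{\bar i:i\notin\sigma\}$, $\sigma\in\mathcal C$;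 its Stanley–Reisner ideal (identifying vertex $i$ with $x_i$ and $\bar i$ with $y_i$) is $I_{\Gamma(\mathcal C)}=\langle x^\sigma y^\tau:\sigma\sqcup\{\bar j:j\in\tau\}\notin\Gamma(\mathcal C)\rangle\subseteq S$. *)

From HB Require Import structures.
From mathcomp Require Import all_boot all_order all_algebra.
From mathcomp Require Import mpoly.
Set Implicit Arguments. Unset Strict Implicit. Unset Printing Implicit Defensive.
Import GRing.Theory.
Local Open Scope ring_scope.

(* R = F_2[x_1..x_n] ; S = F_2[x_1..x_n,y_1..y_n], where x_i = 'X_(lshift n i)
   and y_i = 'X_(rshift n i) in the polynomial ring with n + n variables. *)
Notation Rpoly n := {mpoly 'F_2[n]}.
Notation Spoly n := {mpoly 'F_2[n + n]}.

Definition ideal_gen (T : comPzRingType) (G : T -> Prop) (f : T) : Prop :=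
  exists s : seq (T * T), (forall p, p \in s -> G p.2) /\
                          f = \sum_(p <- s) p.1 * p.2.

Definition ideal_sum (T : comPzRingType) (I J : T -> Prop) (f : T) : Prop :=
  exists a b, I a /\ J b /\ f = a + b.

Definition rdvd (T : comPzRingType) (g f : T) : Prop := exists h, f = g * h.

Definition xmonR n (s : {set 'I_n}) : Rpoly n := \prod_(i in s) 'X_i.
Definition omxR n (t : {set 'I_n}) : Rpoly n := \prod_(j in t) (1 - 'X_j).
Definition pmR n (s t : {set 'I_n}) : Rpoly n := xmonR s * omxR t.

Definition xmonS n (s : {set 'I_n}) : Spoly n := \prod_(i in s) 'X_(lshift n i).
Definition ymonS n (t : {set 'I_n}) : Spoly n := \prod_(j in t) 'X_(rshift n j).

Definition pseudo_monomial n (f : Rpoly n) : Prop :=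
  exists s t : {set 'I_n}, [disjoint s & t] /\ f = pmR s t.

Definition eval_at n (f : Rpoly n) (s : {set 'I_n}) : 'F_2 :=
  f.@[fun i => (i \in s)%:R].

Definition I_code n (C : {set {set 'I_n}}) (f : Rpoly n) : Prop :=
  forall s, s \in C -> eval_at f s = 0.

Definition J_code n (C : {set {set 'I_n}}) : Rpoly n -> Prop :=
  ideal_gen (fun g => exists s : {set 'I_n}, s \notin C /\ g = pmR s (~: s)).

Definition CF n (J : Rpoly n -> Prop) (f : Rpoly n) : Prop :=
  pseudo_monomial f /\ J f /\
  forall g, pseudo_monomial g -> J g -> g <> f -> ~ rdvd g f.

(* polar complex on vertex set [n] ⊔ {1bar..nbar} = 'I_n + 'I_n
   (inl i = vertex i, inr i = vertex ibar) *)
Definition polar_facet n (c : {set 'I_n}) : {set 'I_n + 'I_n} :=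
  [set inl i | i in c] :|: [set inr i | i in ~: c].
Definition polar_complex n (C : {set {set 'I_n}}) : {set {set 'I_n + 'I_n}} :=
  [set F : {set 'I_n + 'I_n} | [exists c in C, F \subset polar_facet c]].

(* monomial of a vertex set: vertex inl i |-> x_i, inr i |-> y_i *)
Definition vmonS n (F : {set 'I_n + 'I_n}) : Spoly n :=
  \prod_(v in F) 'X_(unsplit v).

Definition SR_ideal n (D : {set {set 'I_n + 'I_n}}) : Spoly n -> Prop :=
  ideal_gen (fun g => exists F, F \notin D /\ g = vmonS F).

From HB Require Import structures.
From mathcomp Require Import all_boot all_order all_algebra.
From mathcomp Require Import mpoly.
Import GRing.Theory.
Local Open Scope ring_scope.

(** x^σ y^τ is the face monomial of σ ⊔ τ̄, and a squarefree monomial lies in a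
    Stanley–Reisner ideal iff its support is a non-face (evaluate at the
    indicator vector of a face).  σ ⊔ τ̄ is a non-face of Γ(C) iff no c ∈ C
    satisfies σ ⊆ c ⊆ [n] ∖ τ, which is also exactly when x^σ(1-x)^τ vanishes
    on C.
    For the generators: a non-face either contains some {i, ī}, and is then a
    multiple of x_i y_i, or has σ ∩ τ = ∅ and x^σ(1-x)^τ ∈ I_C.  Splitting along
    free variables with x_i + (1 - x_i) = 1 shows that such a pseudo-monomial
    lies in J_C, so a divisor of it of least degree in J_C belongs to CF(J_C);
    x^a(1-x)^b | x^σ(1-x)^τ forces a ⊆ σ and b ⊆ τ (evaluate at σ and at
    [n] ∖ τ). *)

Section IdealGen.
Variable T : comPzRingType.
Implicit Types (G H P : T -> Prop) (a b c g f : T).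

Lemma ideal_gen_ind G P :
  P 0 -> (forall a b, P a -> P b -> P (a + b)) ->
  (forall c g, G g -> P (c * g)) ->
  forall f, ideal_gen G f -> P f.
Proof.
move=> P0 PD PM f [s [sG ->]]; elim: s sG => [|p s IHs] sG; first by rewrite big_nil.
rewrite big_cons; apply: PD; first by apply: PM; apply: sG; rewrite mem_head.
by apply: IHs => q sq; apply: sG; rewrite in_cons sq orbT.
Qed.

Lemma ideal_gen0 G : ideal_gen G 0.
Proof. by exists [::]; rewrite big_nil. Qed.

Lemma ideal_genD G a b : ideal_gen G a -> ideal_gen G b -> ideal_gen G (a + b).
Proof.
move=> [s [sG ->]] [t [tG ->]]; exists (s ++ t); rewrite big_cat; split=> // p.
by rewrite mem_cat => /orP[/sG | /tG].
Qed.

Lemma ideal_genMl G c a : ideal_gen G a -> ideal_gen G (c * a).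
Proof.
move=> [s [sG ->]]; exists [seq (c * p.1, p.2) | p <- s]; split.
  by move=> _ /mapP[p /sG Gp ->].
by rewrite big_map mulr_sumr; apply: eq_bigr => p _; rewrite mulrA.
Qed.

Lemma mem_ideal_gen G g : G g -> ideal_gen G g.
Proof.
by move=> Gg; exists [:: (1, g)]; rewrite big_seq1 mul1r; split=> // p /[!inE] /eqP->.
Qed.

Lemma ideal_gen_sub G H :
  (forall g, G g -> ideal_gen H g) -> forall f, ideal_gen G f -> ideal_gen H f.
Proof.
move=> GH; apply: ideal_gen_ind => [|a b|c g /GH]; last exact: ideal_genMl.
  exact: ideal_gen0.
exact: ideal_genD.
Qed.

Lemma ideal_gen_sub_sum G H1 H2 :
  (forall g, G g -> ideal_sum (ideal_gen H1) (ideal_gen H2) g) ->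
  forall f, ideal_gen G f -> ideal_sum (ideal_gen H1) (ideal_gen H2) f.
Proof.
move=> GH; apply: ideal_gen_ind.
- by exists 0, 0; rewrite addr0; split; last split; try apply: ideal_gen0.
- move=> _ _ [a1 [b1 [Ha1 [Hb1 ->]]]] [a2 [b2 [Ha2 [Hb2 ->]]]].
  exists (a1 + a2), (b1 + b2); rewrite addrACA.
  by split; last split; try apply: ideal_genD.
- move=> c g /GH[a [b [Ha [Hb ->]]]]; exists (c * a), (c * b); rewrite mulrDr.
  by split; last split; try apply: ideal_genMl.
Qed.

End IdealGen.

Lemma meval_ideal_gen (R : comNzRingType) k (G : {mpoly R[k]} -> Prop) v f :
  (forall g, G g -> g.@[v] = 0) -> ideal_gen G f -> f.@[v] = 0.
Proof.
move=> Gv; move: f; apply: ideal_gen_ind => [|a b|c g /Gv]; first exact: meval0.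
  by rewrite mevalD => -> ->; rewrite addr0.
by rewrite mevalM => ->; rewrite mulr0.
Qed.

Lemma natb_eq0 (R : nzSemiRingType) (b : bool) : ((b%:R : R) == 0) = ~~ b.
Proof. by case: b; rewrite ?oner_eq0 ?eqxx. Qed.

Lemma subr_natb (R : pzRingType) (b : bool) : 1 - (b%:R : R) = (~~ b)%:R.
Proof. by case: b; rewrite ?subrr ?subr0. Qed.

Lemma prod_natb_subset (R : comPzSemiRingType) (T : finType) (A B : {set T}) :
  \prod_(i in A) ((i \in B)%:R : R) = (A \subset B)%:R.
Proof.
have [/subsetP AB | /subsetPn[i Ai nBi]] := boolP (A \subset B).
  by rewrite big1 // => i /AB ->.
by rewrite (bigD1 i) //= (negbTE nBi) mul0r.
Qed.

Lemma disjoint_setU1 (T : finType) (x : T) (A B : {set T}) :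
  [disjoint x |: A & B] = (x \notin B) && [disjoint A & B].
Proof. by rewrite !disjoints_subset subUset sub1set in_setC. Qed.

Lemma meval_prodX (R : comNzRingType) k (I : finType) (A : {pred I})
    (f : I -> 'I_k) (v : 'I_k -> R) :
  (\prod_(i in A) 'X_(f i) : {mpoly R[k]}).@[v] = \prod_(i in A) v (f i).
Proof. by rewrite rmorph_prod; apply: eq_bigr => i _; rewrite /= mevalXU. Qed.

Section CubeEvaluation.
Context {n : nat}.
Implicit Types (s t c : {set 'I_n}) (C : {set {set 'I_n}}).

Lemma eval_pmR s t c :
  eval_at (pmR s t) c = ((s \subset c) && (t \subset ~: c))%:R.
Proof.
rewrite /eval_at /pmR mevalM meval_prodX prod_natb_subset rmorph_prod /=.
under eq_bigr do rewrite mevalB meval1 mevalXU subr_natb -in_setC.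
by rewrite prod_natb_subset -natrM mulnb.
Qed.

Lemma eval_pmR_setC s c : eval_at (pmR s (~: s)) c = (s == c)%:R.
Proof. by rewrite eval_pmR setCS eqEsubset. Qed.

Lemma I_codeP C f : reflect (I_code C f) [forall c in C, eval_at f c == 0].
Proof. by apply: (iffP forall_inP) => H c /H /eqP. Qed.

Lemma I_code_pmR C s t :
  I_code C (pmR s t) <-> forall c, c \in C -> ~~ ((s \subset c) && (t \subset ~: c)).
Proof.
by split=> H c /H; rewrite eval_pmR; [move=> /eqP; rewrite natb_eq0 | move/negbTE->].
Qed.

Lemma eval_atM f g c : eval_at (f * g) c = eval_at f c * eval_at g c.
Proof. exact: mevalM. Qed.

Lemma I_codeMl C g f : I_code C f -> I_code C (g * f).
Proof. by move=> If c /If; rewrite eval_atM => ->; rewrite mulr0. Qed.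

Lemma J_code_I_code C f : J_code C f -> I_code C f.
Proof.
move=> Jf c Cc; apply: meval_ideal_gen Jf => _ [s [nCs ->]].
by rewrite -/(eval_at _ c) eval_pmR_setC; case: eqP nCs => // ->; rewrite Cc.
Qed.

End CubeEvaluation.

Section PseudoMonomials.
Context {n : nat}.
Implicit Types (s t a b c : {set 'I_n}) (C : {set {set 'I_n}}).

Lemma pmR_setU1l s t i : i \notin s -> pmR (i |: s) t = 'X_i * pmR s t.
Proof. by move=> nsi; rewrite /pmR /xmonR big_setU1 //= mulrA. Qed.

Lemma pmR_setU1r s t i : i \notin t -> pmR s (i |: t) = (1 - 'X_i) * pmR s t.
Proof. by move=> nti; rewrite /pmR /omxR big_setU1 //= mulrCA. Qed.

Lemma I_code_J_code_pmR C s t :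
  [disjoint s & t] -> I_code C (pmR s t) -> J_code C (pmR s t).
Proof.
have [k] := ubnP #|~: (s :|: t)|; elim: k s t => // k IHk s t.
have [free0 _ dst | [i]] := set_0Vmem (~: (s :|: t)).
  have {dst}-> : t = ~: s.
    apply/eqP; rewrite eqEsubset -disjoints_subset disjoint_sym dst.
    by rewrite subsets_disjoint -setI_eq0 -setCU free0 eqxx.
  move=> Ist; apply: mem_ideal_gen; exists s; split=> //; apply/negP => Cs.
  by move: (Ist s Cs); rewrite eval_pmR_setC eqxx => /eqP; rewrite oner_eq0.
rewrite !inE negb_or => /andP[nsi nti]; rewrite ltnS => card_free dst Ist.
have free_i : (#|~: (i |: (s :|: t))| < k)%N.
  rewrite setCU setIC -setDE; move: card_free.
  by rewrite (cardsD1 i) in_setC in_setU (negbTE nsi) (negbTE nti) add1n.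
rewrite -[pmR s t]mul1r -(subrK 'X_i 1) mulrDl addrC.
rewrite -pmR_setU1l // -pmR_setU1r //; apply: ideal_genD; apply: IHk.
- by rewrite -setUA.
- by rewrite disjoint_setU1 nti.
- by rewrite pmR_setU1l //; apply: I_codeMl.
- by rewrite setUCA.
- by rewrite disjoint_sym disjoint_setU1 nsi disjoint_sym.
- by rewrite pmR_setU1r //; apply: I_codeMl.
Qed.

Lemma rdvd_pmR_subset {s t a b} :
  [disjoint s & t] -> rdvd (pmR a b) (pmR s t) -> a \subset s /\ b \subset t.
Proof.
move=> dst [h st_ab].
have support c : s \subset c -> t \subset ~: c -> (a \subset c) && (b \subset ~: c).
  move=> sc tc; apply/negPn/negP => nabc.
  have : eval_at (pmR s t) c = eval_at (pmR a b * h) c by rewrite st_ab.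
  by rewrite eval_atM !eval_pmR sc tc (negbTE nabc) mul0r => /eqP; rewrite oner_eq0.
have sCt : s \subset ~: t by rewrite -disjoints_subset.
have tCs : t \subset ~: s by rewrite -disjoints_subset disjoint_sym.
split; first by case/andP: (support s (subxx s) tCs).
by have := support (~: t) sCt; rewrite setCK => /(_ (subxx t)) /andP[].
Qed.

Lemma exists_CF_dvd {C s t} : [disjoint s & t] -> I_code C (pmR s t) ->
  exists s' t', [/\ s' \subset s, t' \subset t & CF (J_code C) (pmR s' t')].
Proof.
move=> dst Ist.
pose P (p : {set 'I_n} * {set 'I_n}) :=
  [&& p.1 \subset s, p.2 \subset t & [forall c in C, eval_at (pmR p.1 p.2) c == 0]].
have Pst : P (s, t) by rewrite /P !subxx; apply/I_codeP.
case: (arg_minnP (fun p : {set 'I_n} * {set 'I_n} => #|p.1| + #|p.2|)%N Pst).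
move=> -[s' t'] /and3P[/= s's t't /I_codeP Is't'] min_s't'.
have ds't' : [disjoint s' & t'] := disjointWl s's (disjointWr t't dst).
exists s', t'; split=> //; split; first by exists s', t'.
split; first exact: I_code_J_code_pmR.
move=> _ [a [b [_ ->]]] /J_code_I_code Iab neq /(rdvd_pmR_subset ds't')[as' bt'].
have /min_s't' /= : P (a, b).
  by rewrite /P (subset_trans as' s's) (subset_trans bt' t't); apply/I_codeP.
move: (subset_leq_card as') (subset_leq_card bt') => le_a le_b le_ab.
apply: neq; congr pmR; apply/eqP; rewrite eqEcard ?as' ?bt' /=.
  by rewrite -(leq_add2r #|t'|) (leq_trans le_ab) // leq_add2l.
by rewrite -(leq_add2l #|s'|) (leq_trans le_ab) // leq_add2r.
Qed.

End PseudoMonomials.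

Section PolarComplex.
Context {n : nat}.
Implicit Types (s t c : {set 'I_n}) (F G : {set 'I_n + 'I_n}).
Implicit Types (C : {set {set 'I_n}}) (D : {set {set 'I_n + 'I_n}}).

Definition polar_set s t : {set 'I_n + 'I_n} := inl @: s :|: inr @: t.

Lemma polar_facetE c : polar_facet c = polar_set c (~: c).
Proof. by []. Qed.

Lemma inl_notin_imset_inr (i : 'I_n) t : inl i \notin inr @: t.
Proof. by apply/negP => /imsetP[]. Qed.

Lemma inr_notin_imset_inl (i : 'I_n) s : inr i \notin inl @: s.
Proof. by apply/negP => /imsetP[]. Qed.

Lemma in_polar_set s t v :
  (v \in polar_set s t) = match v with inl i => i \in s | inr j => j \in t end.
Proof.
rewrite inE; case: v => i.
  by rewrite (mem_imset _ _ inl_inj) (negbTE (inl_notin_imset_inr _ _)) orbF.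
by rewrite (mem_imset _ _ inr_inj) (negbTE (inr_notin_imset_inl _ _)).
Qed.

Lemma polar_set_subset s t s' t' :
  (polar_set s t \subset polar_set s' t') = (s \subset s') && (t \subset t').
Proof.
apply/subsetP/andP => [sub | [/subsetP ss' /subsetP tt'] [] i]; last first.
- by rewrite !in_polar_set => /tt'.
- by rewrite !in_polar_set => /ss'.
split; apply/subsetP => i.
  by have := sub (inl i); rewrite !in_polar_set.
by have := sub (inr i); rewrite !in_polar_set.
Qed.

Lemma polar_set_preimset F : F = polar_set (inl @^-1: F) (inr @^-1: F).
Proof. by apply/setP => -[] i; rewrite in_polar_set inE. Qed.

Lemma xmonS_ymonS s t : xmonS s * ymonS t = vmonS (polar_set s t).
Proof.
have disj : [disjoint inl @: s & inr @: t].
  rewrite disjoint_subset; apply/subsetP => _ /imsetP[i _ ->].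
  exact: inl_notin_imset_inr.
rewrite /vmonS (eq_bigl [predU inl @: s & inr @: t]) => [|v]; last by rewrite !inE.
by rewrite bigU // !big_imset // => i j _ _ [].
Qed.

Lemma polar_complex_closed C F G :
  G \subset F -> F \in polar_complex C -> G \in polar_complex C.
Proof.
move=> GF; rewrite !inE => /exists_inP[c Cc Fc].
by apply/exists_inP; exists c => //; apply: subset_trans Fc.
Qed.

Lemma SR_ideal_vmonS D F :
  (forall F G, G \subset F -> F \in D -> G \in D) ->
  SR_ideal D (vmonS F) <-> F \notin D.
Proof.
move=> D_closed; split=> [SRF | nDF]; last by apply: mem_ideal_gen; exists F.
pose v k : 'F_2 := (split k \in F)%:R.
have vmonSE G : (vmonS G).@[v] = (G \subset F)%:R.
  rewrite meval_prodX; under eq_bigr do rewrite /v unsplitK.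
  exact: prod_natb_subset.
apply/negP => DF.
have : (vmonS F).@[v] = 0.
  apply: meval_ideal_gen SRF => _ [G [nDG ->]]; apply/eqP; rewrite vmonSE natb_eq0.
  by apply/negP => GF; move/negP: nDG; apply; apply: D_closed GF DF.
by rewrite vmonSE subxx => /eqP; rewrite oner_eq0.
Qed.

Lemma SR_polar_xy_I_code C s t :
  SR_ideal (polar_complex C) (xmonS s * ymonS t) <-> I_code C (pmR s t).
Proof.
rewrite xmonS_ymonS; apply: iff_trans (SR_ideal_vmonS _ _ (polar_complex_closed C)) _.
apply: iff_trans (iff_sym (I_code_pmR _ _ _)).
rewrite inE negb_exists_in; split=> [/forall_inP nsub c /nsub | nsub].
  by rewrite polar_facetE polar_set_subset.
by apply/forall_inP => c /nsub; rewrite polar_facetE polar_set_subset.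
Qed.

End PolarComplex.

Section CanonicalFormGenerators.
Variables (n : nat) (C : {set {set 'I_n}}).

Definition CF_xy_gen (g : Spoly n) : Prop :=
  exists s t : {set 'I_n}, CF (J_code C) (pmR s t) /\ g = xmonS s * ymonS t.

Definition diag_xy_gen (g : Spoly n) : Prop :=
  exists i : 'I_n, g = 'X_(lshift n i) * 'X_(rshift n i).

Lemma xmonS_ymonS_subset {s t s' t' : {set 'I_n}} : s' \subset s -> t' \subset t ->
  xmonS s * ymonS t = xmonS (s :\: s') * ymonS (t :\: t') * (xmonS s' * ymonS t').
Proof.
move=> s's t't; rewrite /xmonS /ymonS.
rewrite (big_setID (A := s) s') (big_setID (A := t) t') /=.
by rewrite (setIidPr s's) (setIidPr t't) mulrACA mulrC.
Qed.

Lemma xmonS_ymonS_set1 (i : 'I_n) :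
  xmonS [set i] * ymonS [set i] = 'X_(lshift n i) * 'X_(rshift n i).
Proof. by rewrite /xmonS /ymonS !big_set1. Qed.

Lemma SR_polar_sub_sum f :
  SR_ideal (polar_complex C) f ->
  ideal_sum (ideal_gen CF_xy_gen) (ideal_gen diag_xy_gen) f.
Proof.
apply: ideal_gen_sub_sum => _ [F [nF ->]].
rewrite [F]polar_set_preimset in nF *; move: (inl @^-1: F) (inr @^-1: F) nF => s t nF.
rewrite -xmonS_ymonS.
have [/eqP | [i /setIP[si ti]]] := set_0Vmem (s :&: t).
  rewrite setI_eq0 => dst; exists (xmonS s * ymonS t), 0; rewrite addr0.
  split; last by split; first exact: ideal_gen0.
  have /SR_polar_xy_I_code Ist : SR_ideal (polar_complex C) (xmonS s * ymonS t).
    by rewrite xmonS_ymonS; apply: mem_ideal_gen; exists (polar_set s t).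
  have [s' [t' [s's t't CFs't']]] := exists_CF_dvd dst Ist.
  rewrite (xmonS_ymonS_subset s's t't); apply: ideal_genMl.
  by apply: mem_ideal_gen; exists s', t'.
exists 0, (xmonS s * ymonS t); rewrite add0r; split; first exact: ideal_gen0.
split=> //; rewrite (@xmonS_ymonS_subset _ _ [set i] [set i]) ?sub1set //.
by apply: ideal_genMl; apply: mem_ideal_gen; exists i; rewrite xmonS_ymonS_set1.
Qed.

Lemma sum_sub_SR_polar f :
  ideal_sum (ideal_gen CF_xy_gen) (ideal_gen diag_xy_gen) f ->
  SR_ideal (polar_complex C) f.
Proof.
move=> [a [b [Ha [Hb ->]]]]; apply: ideal_genD.
  apply: ideal_gen_sub Ha => _ [s [t [[_ [/J_code_I_code Ist _]] ->]]].
  exact/SR_polar_xy_I_code.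
apply: ideal_gen_sub Hb => _ [i ->]; rewrite -xmonS_ymonS_set1.
by apply/SR_polar_xy_I_code/I_code_pmR => c _; rewrite !sub1set in_setC andbN.
Qed.

End CanonicalFormGenerators.

Theorem lemma6p7 (n : nat) (C : {set {set 'I_n}}) :
  C != set0 ->
  (forall s t : {set 'I_n},
      SR_ideal (polar_complex C) (xmonS s * ymonS t) <-> I_code C (pmR s t)) /\
  (forall f : Spoly n,
      SR_ideal (polar_complex C) f <->
      ideal_sum
        (ideal_gen (fun g => exists s t : {set 'I_n},
                        CF (J_code C) (pmR s t) /\ g = xmonS s * ymonS t))
        (ideal_gen (fun g => exists i : 'I_n,
                        g = 'X_(lshift n i) * 'X_(rshift n i)))
        f).
Proof.
move=> _; split=> [s t | f]; first exact: SR_polar_xy_I_code.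
by split; [apply: SR_polar_sub_sum | apply: sum_sub_SR_polar].
Qed.
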